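(* Let $f$ be a nonzero real homogeneous polynomial of degree $p\ge1$ in $n$ variables. (a) If $f(x)=a(c^\top x)^p$ for some $c\in\mathbb R^n\setminus\{0\}$ and $a\ne0$, then $\|f^k\|_{HS}=\|f^k\|_\sigma=|a|^k\|c\|_2^{kp}$ for all $k\in\mathbb N$. (b) If $f$ is not of this form, then for all $k,l\in\mathbb N$: $\|f^{k+l}\|_{HS}<\|f^k\|_{HS}\|f^l\|_{HS}$, $\|f^{2k}\|_{HS}<\|f^k\|_{HS}^2$, and $\|f\|_\sigma^k<\|f^k\|_{HS}$. Moreover the limit $\rho_1(f):=\lim_{k\to\infty}\|f^k\|_{HS}^{1/k}$ exists, $\rho_1(f)\ge\|f\|_\sigma$, and $\rho_1(f)<\|f^k\|_{HS}^{1/k}$ for every $k\in\mathbb N$.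
   Context: Every real homogeneous polynomial $f$ of degree $p$ in $n$ variables is $f(x)=\langle\mathcal F,\otimes^p x\rangle$ for a unique symmetric tensor $\mathcal F\in\mathrm S^p\mathbb R^n$, where $\langle\cdot,\cdot\rangle$ is the entrywise (Hilbert–Schmidt) inner product of tensors and $\otimes^p x=x\otimes\cdots\otimes x$. Set $\|f\|_{HS}:=\|\mathcal F\|_{HS}=\sqrt{\langle\mathcal F,\mathcal F\rangle}$; equivalently, if $f(x)=\sum_{j_1+\cdots+j_n=p}\frac{p!}{j_1!\cdots j_n!}\phi_{j_1,\dots,j_n}x_1^{j_1}\cdots x_n^{j_n}$ then $\|f\|_{HS}^2=\sum\frac{p!}{j_1!\cdots j_n!}\phi_{j_1,\dots,j_n}^2$. Also $\|f\|_\sigma:=\max\{|f(x)|:x\in\mathbb R^n,\|x\|_2=1\}$. Powers $f^k$ are ordinary powers of polynomials. *)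

From HB Require Import structures.
From mathcomp Require Import all_boot all_order all_algebra.
From mathcomp Require Import mpoly.
From mathcomp Require Import all_classical all_reals all_analysis.

Set Implicit Arguments.
Unset Strict Implicit.
Unset Printing Implicit Defensive.

Import Order.TTheory GRing.Theory Num.Theory.
Import numFieldNormedType.Exports.
Local Open Scope classical_set_scope.
Local Open Scope ring_scope.

Section HSDefs.
Context {R : realType} {n : nat}.

(* Weight p!/(j_1!...j_n!) appearing in the Hilbert-Schmidt norm, inverted:
   if f = sum_m (p!/m!) phi_m x^m, then phi_m = f@_m * m!/p!, and
   ||f||_HS^2 = sum_m (p!/m!) phi_m^2 = sum_m (m!/p!) (f@_m)^2,
   where p = mdeg m for every monomial of the homogeneous f. *)
Definition hs_weight (m : 'X_{1..n}) : R :=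
  (\prod_(i < n) (m i)`!)%:R / ((mdeg m)`!)%:R.

(* Hilbert-Schmidt norm of a homogeneous polynomial = HS norm of its
   unique symmetric coefficient tensor. *)
Definition hs_norm (f : {mpoly R[n]}) : R :=
  Num.sqrt (\sum_(m <- msupp f) hs_weight m * (f@_m) ^+ 2).

Definition l2norm (x : 'I_n -> R) : R := Num.sqrt (\sum_i x i ^+ 2).

(* spectral norm: max of |f(x)| over the Euclidean unit sphere
   (the max is attained, so it is the supremum) *)
Definition sigma_norm (f : {mpoly R[n]}) : R :=
  sup [set `|f.@[x]| | x in [set x : 'I_n -> R | l2norm x = 1]].

Definition power_of_linear_form (f : {mpoly R[n]}) (p : nat) : Prop :=
  exists (a : R) (c : 'I_n -> R),
    [/\ a != 0, (exists i, c i != 0) & f = a *: (\sum_i c i *: 'X_i) ^+ p].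

Definition hs_root_seq (f : {mpoly R[n]}) : R^nat :=
  fun k => hs_norm (f ^+ k) `^ (k%:R)^-1.

Definition rho1 (f : {mpoly R[n]}) : R := limn (hs_root_seq f).

End HSDefs.

From HB Require Import structures.
From mathcomp Require Import all_boot all_order all_algebra.
From mathcomp Require Import ssrcomplements mpoly.
From mathcomp Require Import all_classical all_reals all_analysis.
From mathcomp Require Import ring lra zify.

Import Order.TTheory GRing.Theory Num.Theory.
Import numFieldNormedType.Exports.
Local Open Scope classical_set_scope.
Local Open Scope ring_scope.

(* Write phi a = (a!/P!) f_a and psi b = (b!/Q!) g_b for the rescaled coefficients of
   homogeneous f, g of degrees P, Q.  The coefficient of x^m in f g is the sum over
   a + b = m of (P!/a!)(Q!/b!) phi a psi b, and these weights add up to (P+Q)!/m!; so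
   Cauchy-Schwarz gives ||f g||_HS <= ||f||_HS ||g||_HS, with equality only when
   phi a psi b depends on a + b alone.  Moving units of a into a fixed coordinate s
   then shows phi a = lam u^a, i.e. f = lam (u.x)^P; and if f^k is such a power, so
   is f.  The same Cauchy-Schwarz bounds |f(x)| by ||f||_HS |x|^P, with equality at
   x = c/|c| for f = a (c.x)^P.
   When f is not a power of a linear form, k |-> ||f^k||_HS is therefore strictly
   submultiplicative: Fekete's lemma gives rho_1(f) = inf_k ||f^k||_HS^(1/k), and
   ||f^(2k)||_HS^(1/2k) < ||f^k||_HS^(1/k) shows that the infimum is never attained. *)

Lemma lagrange_identity_weighted (R : comNzRingType) (I : finType) (P : pred I)
    (w r s : I -> R) :
  \sum_(i | P i) \sum_(j | P j) w i * w j * (r i * s j - r j * s i) ^+ 2 =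
  2%:R * ((\sum_(i | P i) w i * r i ^+ 2) * (\sum_(i | P i) w i * s i ^+ 2)
          - (\sum_(i | P i) w i * r i * s i) ^+ 2).
Proof.
have sum_mulM (F G : I -> R) : \sum_(i | P i) \sum_(j | P j) F i * G j =
    (\sum_(i | P i) F i) * (\sum_(i | P i) G i).
  by rewrite mulr_suml; apply: eq_bigr => i _; rewrite mulr_sumr.
set X := fun i => w i * r i ^+ 2; set Y := fun i => w i * s i ^+ 2.
set Z := fun i => w i * r i * s i.
transitivity (\sum_(i | P i) \sum_(j | P j) (X i * Y j + X j * Y i - 2%:R * (Z i * Z j))).
  by apply: eq_bigr => i _; apply: eq_bigr => j _; rewrite /X /Y /Z; ring.
under eq_bigr => i _ do rewrite sumrB big_split /=.
rewrite sumrB big_split /= sum_mulM exchange_big /= sum_mulM.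
have -> : \sum_(i | P i) \sum_(j | P j) 2%:R * (Z i * Z j) = 2%:R * (\sum_(i | P i) Z i) ^+ 2.
  by rewrite expr2 -sum_mulM mulr_sumr; apply: eq_bigr => i _; rewrite mulr_sumr.
ring.
Qed.

Section WeightedCauchySchwarz.
Context {R : realDomainType} {I : finType} (P : pred I) (w r s : I -> R).

Lemma cauchy_schwarz_weighted : (forall i, P i -> 0 <= w i) ->
  (\sum_(i | P i) w i * r i * s i) ^+ 2 <=
  (\sum_(i | P i) w i * r i ^+ 2) * (\sum_(i | P i) w i * s i ^+ 2).
Proof.
move=> w_ge0; rewrite -subr_ge0 -(pmulr_rge0 _ (ltr0Sn _ 1)).
rewrite -lagrange_identity_weighted; apply: sumr_ge0 => i Pi; apply: sumr_ge0 => j Pj.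
by rewrite mulr_ge0 ?sqr_ge0 ?mulr_ge0 ?w_ge0.
Qed.

Lemma cauchy_schwarz_weighted_eq : (forall i, P i -> 0 < w i) ->
  (\sum_(i | P i) w i * r i * s i) ^+ 2 =
  (\sum_(i | P i) w i * r i ^+ 2) * (\sum_(i | P i) w i * s i ^+ 2) ->
  forall i j, P i -> P j -> r i * s j = r j * s i.
Proof.
move=> w_gt0 eq_cs i j Pi Pj.
have term_ge0 k l : P k -> P l -> 0 <= w k * w l * (r k * s l - r l * s k) ^+ 2.
  by move=> Pk Pl; rewrite mulr_ge0 ?sqr_ge0 ?mulr_ge0 ?ltW ?w_gt0.
have sum_eq0 :
    \sum_(k | P k) \sum_(l | P l) w k * w l * (r k * s l - r l * s k) ^+ 2 = 0.
  by rewrite lagrange_identity_weighted eq_cs subrr mulr0.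
have row_i := psumr_eq0P (fun k Pk => sumr_ge0 _ (term_ge0 k ^~ Pk)) sum_eq0 Pi.
move/eqP: (psumr_eq0P (term_ge0 i ^~ Pi) row_i Pj).
by rewrite !mulf_eq0 (gt_eqF (w_gt0 _ Pi)) (gt_eqF (w_gt0 _ Pj)) subr_eq0 /= orbb; move/eqP.
Qed.

End WeightedCauchySchwarz.

Lemma sum_sqr_gt0 {R : realDomainType} {I : finType} {c : I -> R} :
  (exists i, c i != 0) -> 0 < \sum_i c i ^+ 2.
Proof.
move=> [i0 ci0]; rewrite (bigD1 i0) //= ltr_pwDl ?sumr_ge0 // => [|i _]; last exact: sqr_ge0.
by rewrite lt0r sqr_ge0 sqrf_eq0 ci0.
Qed.

Section MultinomialExpansion.
Context {R : numFieldType} {n : nat}.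
Implicit Types (m : 'X_{1..n}) (c : 'I_n -> R).

Definition mfact m : nat := (\prod_(i < n) (m i)`!)%N.

Definition mpow c m : R := \prod_(i < n) c i ^+ m i.

Definition linform c : {mpoly R[n]} := \sum_i c i *: 'X_i.

Lemma mfact_gt0 m : (0 < mfact m)%N.
Proof. by rewrite prodn_gt0 // => i; rewrite fact_gt0. Qed.

Lemma mfact_neq0 m : (mfact m)%:R != 0 :> R.
Proof. by rewrite pnatr_eq0 -lt0n mfact_gt0. Qed.

Lemma mnmB1_neq m i j : j != i -> (m - U_(i))%MM j = m j.
Proof. by move=> ji; rewrite mnmBE mnm1E eq_sym (negbTE ji) subn0. Qed.

Lemma mnmB1_eq m i : (m - U_(i))%MM i = (m i).-1.
Proof. by rewrite mnmBE mnm1E eqxx subn1. Qed.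

Lemma mfact_mnmB1 {m i} : (0 < m i)%N -> mfact m = (m i * mfact (m - U_(i))%MM)%N.
Proof.
move=> mi; rewrite /mfact (bigD1 i) //= [X in _ = (_ * X)%N](bigD1 i) //= mnmB1_eq.
rewrite mulnA -{1}(prednK mi) factS prednK //; congr (_ * _)%N.
by apply: eq_bigr => j ji; rewrite mnmB1_neq.
Qed.

Lemma mpow_mnmB1 c {m i} : (0 < m i)%N -> c i * mpow c (m - U_(i))%MM = mpow c m.
Proof.
move=> mi; rewrite /mpow (bigD1 i) //= [X in _ = X](bigD1 i) //= mnmB1_eq.
rewrite mulrA -exprS prednK //; congr (_ * _).
by apply: eq_bigr => j ji; rewrite mnmB1_neq.
Qed.

Lemma mdeg_mnmB1 m i : (0 < m i)%N -> mdeg (m - U_(i))%MM = (mdeg m).-1.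
Proof.
move=> mi; have le : (U_(i) <= m)%MM by rewrite lep1mP -lt0n.
by rewrite -{2}(submK le) mdegD mdeg1 addn1.
Qed.

Lemma mpowD c m1 m2 : mpow c (m1 + m2)%MM = mpow c m1 * mpow c m2.
Proof. by rewrite /mpow -big_split /=; apply: eq_bigr => i _; rewrite mnmDE exprD. Qed.

Lemma mpowU c i : mpow c U_(i)%MM = c i.
Proof.
rewrite /mpow (bigD1 i) //= mnm1E eqxx expr1 big1 ?mulr1 // => j ji.
by rewrite mnm1E eq_sym (negbTE ji) expr0.
Qed.

Lemma mpowMn c m k : mpow c (m *+ k)%MM = mpow c m ^+ k.
Proof. by rewrite /mpow -prodrXl; apply: eq_bigr => i _; rewrite mulmnE exprM. Qed.

Lemma mpow_sqr c m : mpow (fun i => c i ^+ 2) m = mpow c m ^+ 2.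
Proof. by rewrite /mpow -prodrXl; apply: eq_bigr => i _; rewrite -!exprM mulnC. Qed.

Lemma mpow1 m : mpow (fun _ => 1) m = 1.
Proof. by rewrite /mpow big1 // => i _; rewrite expr1n. Qed.

Lemma mcoeffMX1 (p : {mpoly R[n]}) i m :
  (p * 'X_i)@_m = if (0 < m i)%N then p@_(m - U_(i))%MM else 0.
Proof.
case: ifP => mi.
  have le : (U_(i) <= m)%MM by rewrite lep1mP -lt0n.
  by rewrite -{1}(submK le) addmC mcoeffMX.
apply/eqP; rewrite mcoeff_eq0; apply/negP.
rewrite (perm_mem (msuppMX p U_(i))) => /mapP [m' _ hm].
by move: mi; rewrite hm mnmDE mnm1E eqxx.
Qed.

Lemma mdeg_gt0_exists m : (0 < mdeg m)%N -> exists i, (0 < m i)%N.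
Proof.
rewrite lt0n mdegE sum_nat_eq0 negb_forall => /existsP [i /= mi].
by exists i; rewrite lt0n.
Qed.

Lemma mnm_le_mdeg m i : (m i <= mdeg m)%N.
Proof. by rewrite mdegE (bigD1 i) //= leq_addr. Qed.

Lemma mdeg_ge_addn m i j : j != i -> (m i + m j <= mdeg m)%N.
Proof. by move=> ji; rewrite mdegE (bigD1 i) //= (bigD1 j) //= addnA leq_addr. Qed.

Lemma mdeg_gt_exists m s : (m s < mdeg m)%N -> exists2 i, i != s & (0 < m i)%N.
Proof.
rewrite mdegE (bigD1 s) //= -{1}[m s]addn0 ltn_add2l lt0n sum_nat_eq0 negb_forall.
by case/existsP => i; rewrite negb_imply -lt0n => /andP[]; exists i.
Qed.

Lemma mcoeff_linformX c N m :
  (linform c ^+ N)@_m =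
  if mdeg m == N then (N`!)%:R / (mfact m)%:R * mpow c m else 0.
Proof.
elim: N m => [|N IH] m.
  rewrite expr0 mcoeff1 mdeg_eq0; case: eqP => // ->.
  by rewrite /mfact /mpow fact0 !big1 ?divr1 ?mul1r // => i _; rewrite mnm0E.
rewrite exprSr /linform mulr_sumr raddf_sum /=.
under eq_bigr => i _ do rewrite -scalerAr mcoeffZ mcoeffMX1 -/(linform c) IH.
case: (eqVneq (mdeg m) N.+1) => [degm|degm]; last first.
  rewrite big1 // => i _; case: posnP => [//|mi]; first by rewrite mulr0.
  by rewrite mdeg_mnmB1 // -eqSS prednK ?(negbTE degm) ?mulr0 // (leq_trans mi)
    ?mnm_le_mdeg.
transitivity (\sum_(i < n) (m i)%:R * ((N`!)%:R / (mfact m)%:R * mpow c m)).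
  apply: eq_bigr => i _; case: (posnP (m i)) => [-> | mi]; first by rewrite mulr0 mul0r.
  rewrite mdeg_mnmB1 // degm eqxx (mfact_mnmB1 mi) -(mpow_mnmB1 c mi) natrM.
  have mi_neq0 : (m i)%:R != 0 :> R by rewrite pnatr_eq0 -lt0n.
  by field; rewrite mi_neq0 mfact_neq0.
rewrite -mulr_suml -natr_sum -mdegE degm factS natrM.
by field; rewrite mfact_neq0.
Qed.

Lemma linformX_homog c N : linform c ^+ N \is N.-homog.
Proof.
apply/dhomogP => m; rewrite mcoeff_msupp mcoeff_linformX.
by case: (mdeg m =P N) => //; rewrite eqxx.
Qed.

Lemma meval_linform c x : (linform c).@[x] = \sum_i c i * x i.
Proof. by rewrite /linform raddf_sum; apply: eq_bigr => i _; rewrite /= mevalZ mevalXU. Qed.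

Lemma big_msupp_bmnm B (p : {mpoly R[n]}) (F : 'X_{1..n} -> R) :
  (forall m, m \in msupp p -> (mdeg m < B)%N) -> (forall m, p@_m = 0 -> F m = 0) ->
  \sum_(m <- msupp p) F m = \sum_(m : 'X_{1..n < B}) F m.
Proof.
move=> degB F0; rewrite (big_mksub 'X_{1..n < B}) //=; last exact: msupp_uniq.
by rewrite big_rmcond //= => m /memN_msupp_eq0; apply: F0.
Qed.

Lemma big_homog_bmnm B {N} {p : {mpoly R[n]}} (F : 'X_{1..n} -> R) :
  (N < B)%N -> p \is N.-homog -> (forall m, p@_m = 0 -> F m = 0) ->
  \sum_(m <- msupp p) F m = \sum_(m : 'X_{1..n < B} | mdeg m == N) F m.
Proof.
move=> NB homp F0; rewrite (big_msupp_bmnm B) //; last by move=> m /(dhomog_mf homp) ->.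
rewrite [RHS]big_mkcond /=; apply: eq_bigr => m _; case: eqP => // /eqP degm.
by rewrite F0 // (dhomog_nemf_coeff homp degm).
Qed.

Lemma sum_multinomial c N :
  \sum_(m : 'X_{1..n < N.+1} | mdeg m == N) (N`!)%:R / (mfact m)%:R * mpow c m
  = (\sum_i c i) ^+ N.
Proof.
have := meval_linform c (fun _ => 1); under eq_bigr => i _ do rewrite mulr1.
move=> <-; rewrite -rmorphXn /= mevalE (big_homog_bmnm N.+1 _ (ltnSn N) (linformX_homog c N));
  last by move=> m ->; rewrite mul0r.
apply: eq_bigr => m /eqP degm.
by rewrite mcoeff_linformX degm eqxx -/(mpow (fun=> 1) m) mpow1 mulr1.
Qed.

End MultinomialExpansion.

Section HilbertSchmidtNorm.
Context {R : realType} {n : nat}.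
Implicit Types (m : 'X_{1..n}) (p : {mpoly R[n]}).

Definition hs_sqnorm p : R := \sum_(m <- msupp p) hs_weight m * p@_m ^+ 2.

Lemma hs_normE p : hs_norm p = Num.sqrt (hs_sqnorm p).
Proof. by []. Qed.

Lemma hs_weightE m : hs_weight m = (mfact m)%:R / ((mdeg m)`!)%:R :> R.
Proof. by []. Qed.

Lemma hs_weight_gt0 m : 0 < hs_weight m :> R.
Proof. by rewrite hs_weightE divr_gt0 // ltr0n ?fact_gt0 ?mfact_gt0. Qed.

Lemma multinomial_hs_weight {N m} :
  mdeg m = N -> (N`!)%:R / (mfact m)%:R * hs_weight m = 1 :> R.
Proof.
move=> degm; rewrite hs_weightE degm.
have fact_neq0 : (N`!)%:R != 0 :> R by rewrite pnatr_eq0 -lt0n fact_gt0.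
by field; rewrite fact_neq0 mfact_neq0.
Qed.

Lemma hs_sqnorm_ge0 p : 0 <= hs_sqnorm p.
Proof. by apply: sumr_ge0 => m _; rewrite mulr_ge0 ?sqr_ge0 ?ltW ?hs_weight_gt0. Qed.

Lemma hs_sqnorm_gt0 p : p != 0 -> 0 < hs_sqnorm p.
Proof.
move=> p0; rewrite /hs_sqnorm (bigD1_seq (mlead p)) ?mlead_supp ?msupp_uniq //=.
have lead_gt0 : 0 < hs_weight (mlead p) * p@_(mlead p) ^+ 2.
  by rewrite mulr_gt0 ?hs_weight_gt0 // lt0r sqr_ge0 sqrf_eq0 mleadc_eq0 p0.
have rest_ge0 : 0 <= \sum_(m <- msupp p | m != mlead p) hs_weight m * p@_m ^+ 2.
  by apply: sumr_ge0 => m _; rewrite mulr_ge0 ?sqr_ge0 ?ltW ?hs_weight_gt0.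
lra.
Qed.

Lemma hs_norm_gt0 {p} : p != 0 -> 0 < hs_norm p.
Proof. by move=> p0; rewrite hs_normE sqrtr_gt0 hs_sqnorm_gt0. Qed.

Lemma hs_sqnorm_homog {B N p} : (N < B)%N -> p \is N.-homog ->
  hs_sqnorm p = \sum_(m : 'X_{1..n < B} | mdeg m == N) hs_weight m * p@_m ^+ 2.
Proof. by move=> NB homp; apply: big_homog_bmnm => // m ->; rewrite expr0n mulr0. Qed.

Lemma hs_sqnormZ {N} a {p} : p \is N.-homog -> hs_sqnorm (a *: p) = a ^+ 2 * hs_sqnorm p.
Proof.
move=> homp; rewrite (hs_sqnorm_homog (ltnSn N) (dhomogZ a homp)).
rewrite (hs_sqnorm_homog (ltnSn N) homp) mulr_sumr.
by apply: eq_bigr => m _; rewrite mcoeffZ; ring.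
Qed.

Lemma hs_sqnorm_linformX (c : 'I_n -> R) N :
  hs_sqnorm (linform c ^+ N) = (\sum_i c i ^+ 2) ^+ N.
Proof.
rewrite (hs_sqnorm_homog (ltnSn N) (linformX_homog c N)) -sum_multinomial.
apply: eq_bigr => m /eqP degm; rewrite mcoeff_linformX degm eqxx mpow_sqr.
set w := _ / _; transitivity (w * hs_weight m * (w * mpow c m ^+ 2)); first by ring.
by rewrite (multinomial_hs_weight degm) mul1r.
Qed.

(* Cauchy-Schwarz with the multinomial weights N!/m!, writing p@_m = (N!/m!) (hs_weight m p@_m)
   and using that \sum_m (N!/m!) x^(2m) = (\sum_i x_i^2)^N. *)
Lemma meval_sqr_le {N p} (x : 'I_n -> R) : p \is N.-homog ->
  p.@[x] ^+ 2 <= hs_sqnorm p * (\sum_i x i ^+ 2) ^+ N.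
Proof.
move=> homp; set S := fun m : 'X_{1..n < N.+1} => mdeg m == N.
pose w (m : 'X_{1..n < N.+1}) : R := (N`!)%:R / (mfact m)%:R.
have w_hs (m : 'X_{1..n < N.+1}) : S m -> w m * hs_weight m = 1.
  by move/eqP; apply: multinomial_hs_weight.
have := cauchy_schwarz_weighted S w (fun m : 'X_{1..n < N.+1} => hs_weight m * p@_m)
  (fun m : 'X_{1..n < N.+1} => mpow x m) (fun _ _ => divr_ge0 (ler0n _ _) (ler0n _ _)).
have -> : \sum_(b | S b) w b * (hs_weight b * p@_b) * mpow x b =
    \sum_(b | S b) p@_b * mpow x b.
  by apply: eq_bigr => b Sb; rewrite mulrA w_hs // mul1r.
have -> : \sum_(b | S b) w b * (hs_weight b * p@_b) ^+ 2 =
    \sum_(b | S b) hs_weight b * p@_b ^+ 2.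
  apply: eq_bigr => b Sb; rewrite -[RHS]mul1r -(w_hs b Sb); ring.
have -> : \sum_(b | S b) w b * mpow x b ^+ 2 =
    \sum_(b | S b) w b * mpow (fun i => x i ^+ 2) b.
  by apply: eq_bigr => b _; rewrite mpow_sqr.
rewrite mevalE (big_homog_bmnm _ _ (ltnSn N) homp) => [|m ->]; last by rewrite mul0r.
by rewrite (hs_sqnorm_homog (ltnSn N) homp) -sum_multinomial.
Qed.

Lemma meval_le_hs_norm N p (x : 'I_n -> R) : p \is N.-homog -> l2norm x = 1 ->
  `|p.@[x]| <= hs_norm p.
Proof.
move=> homp x1; have x2_ge0 : 0 <= \sum_i x i ^+ 2 by apply: sumr_ge0 => i _; apply: sqr_ge0.
have x2 : \sum_i x i ^+ 2 = 1 by rewrite -(sqr_sqrtr x2_ge0) -/(l2norm x) x1 expr1n.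
have := meval_sqr_le x homp; rewrite x2 expr1n mulr1.
by rewrite -(ler_sqrt _ (hs_sqnorm_ge0 p)) sqrtr_sqr.
Qed.

End HilbertSchmidtNorm.

Section HSNormMul.
Context {R : realType} {n : nat} {P Q : nat} {f g : {mpoly R[n]}}.
Hypotheses (homf : f \is P.-homog) (homg : g \is Q.-homog).
Local Notation M := 'X_{1..n < (P + Q).+1}.
Local Notation phi a := (hs_weight a * f@_a).
Local Notation psi b := (hs_weight b * g@_b).

Let msplit (m : M) (k : M * M) : bool :=
  (val m == (val k.1 + val k.2)%MM) && (mdeg k.1 == P).
Let split_weight (k : M * M) : R :=
  (P`!)%:R / (mfact k.1)%:R * ((Q`!)%:R / (mfact k.2)%:R).
Let split_term (k : M * M) : R :=
  hs_weight k.1 * f@_k.1 ^+ 2 * (hs_weight k.2 * g@_k.2 ^+ 2).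

Lemma mdeg_msplit2 {m : M} {k} : mdeg m = (P + Q)%N -> msplit m k -> mdeg k.2 = Q.
Proof.
move=> degm /andP [/eqP mk /eqP deg1]; move: degm; rewrite mk mdegD deg1.
by move/addnI.
Qed.

Lemma mcoeffM_msplit (p q : {mpoly R[n]}) (m : M) : p \is P.-homog ->
  (p * q)@_m = \sum_(k | msplit m k) p@_k.1 * q@_k.2.
Proof.
move=> homp; rewrite (mcoeff_poly_mul p q (bmdeg m)).
rewrite (bigID (fun k : M * M => mdeg k.1 == P)) /= [X in _ + X]big1 ?addr0 // => k.
by case/andP=> _ /(dhomog_nemf_coeff homp) ->; rewrite mul0r.
Qed.

(* Comparing coefficients of x^m in (x_1 + ... + x_n)^P (x_1 + ... + x_n)^Q. *)
Lemma sum_split_weight {m : M} : mdeg m = (P + Q)%N ->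
  \sum_(k | msplit m k) split_weight k = ((P + Q)`!)%:R / (mfact m)%:R.
Proof.
move=> degm; have := mcoeff_linformX (fun _ => 1 : R) (P + Q) m.
rewrite degm eqxx mpow1 mulr1 exprD (mcoeffM_msplit _ _ _ (linformX_homog _ _)) => <-.
apply: eq_bigr => k mk; rewrite !mcoeff_linformX !mpow1 !mulr1.
by rewrite (eqP (proj2 (andP mk))) (mdeg_msplit2 degm mk) !eqxx.
Qed.

(* (f g)@_m is the split_weight-weighted sum of phi a * psi b over the splittings of m. *)
Lemma cauchy_schwarz_msplit {m : M} : mdeg m = (P + Q)%N ->
  let C := ((P + Q)`!)%:R / (mfact m)%:R in
  let T := \sum_(k | msplit m k) split_term k in
  ((f * g)@_m ^+ 2 <= T * C) /\
  ((f * g)@_m ^+ 2 = T * C ->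
     forall k k', msplit m k -> msplit m k' -> phi k.1 * psi k.2 = phi k'.1 * psi k'.2).
Proof.
move=> degm C T.
have wt_gt0 k : 0 < split_weight k.
  by rewrite mulr_gt0 // divr_gt0 // ltr0n ?fact_gt0 ?mfact_gt0.
have wt_hs k : msplit m k ->
    split_weight k * (hs_weight k.1 * hs_weight k.2) = 1.
  move=> mk; rewrite /split_weight; set w1 := _ / _; set w2 := _ / _.
  transitivity ((w1 * hs_weight k.1) * (w2 * hs_weight k.2)); first by ring.
  by rewrite !multinomial_hs_weight ?mulr1 ?(eqP (proj2 (andP mk))) ?(mdeg_msplit2 degm mk).
pose rr (k : M * M) := phi k.1 * psi k.2.
have sum_rr : \sum_(k | msplit m k) split_weight k * rr k * 1 = (f * g)@_m.
  rewrite (mcoeffM_msplit _ _ _ homf); apply: eq_bigr => k mk.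
  transitivity (split_weight k * (hs_weight k.1 * hs_weight k.2) * (f@_k.1 * g@_k.2)).
    by rewrite /rr; ring.
  by rewrite wt_hs // mul1r.
have sum_rr2 : \sum_(k | msplit m k) split_weight k * rr k ^+ 2 = T.
  apply: eq_bigr => k mk.
  transitivity (split_weight k * (hs_weight k.1 * hs_weight k.2) * split_term k).
    by rewrite /rr /split_term; ring.
  by rewrite wt_hs // mul1r.
have sum_wt : \sum_(k | msplit m k) split_weight k * 1 ^+ 2 = C.
  by rewrite /C -(sum_split_weight degm); apply: eq_bigr => k _; rewrite expr1n mulr1.
split.
  have := cauchy_schwarz_weighted (msplit m) split_weight rr (fun _ => 1).
  by rewrite sum_rr sum_rr2 sum_wt; apply=> k _; apply: ltW.
move=> eq_cs k k' mk mk'.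
have := cauchy_schwarz_weighted_eq (msplit m) split_weight rr (fun _ => 1).
rewrite sum_rr sum_rr2 sum_wt => /(_ (fun k _ => wt_gt0 k) eq_cs k k' mk mk').
by rewrite !mulr1.
Qed.

Lemma hs_weight_coeffM_le {m : M} : mdeg m = (P + Q)%N ->
  hs_weight m * (f * g)@_m ^+ 2 <= \sum_(k | msplit m k) split_term k.
Proof.
move=> degm; have [cs _] := cauchy_schwarz_msplit degm; move: cs => /=.
set C := _ / _; set T := \sum_(k | _) _ => cs.
have -> : T = hs_weight m * (T * C).
  by rewrite mulrCA [hs_weight m * C]mulrC (multinomial_hs_weight degm) mulr1.
by rewrite ler_pM2l ?hs_weight_gt0.
Qed.

Lemma hs_sqnorm_mul_split :
  hs_sqnorm f * hs_sqnorm g =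
  \sum_(m : M | mdeg m == (P + Q)%N) \sum_(k | msplit m k) split_term k.
Proof.
rewrite (hs_sqnorm_homog (_ : P < (P + Q).+1)%N homf) ?ltnS ?leq_addr //.
rewrite (hs_sqnorm_homog (_ : Q < (P + Q).+1)%N homg) ?ltnS ?leq_addl //.
rewrite mulr_suml; under eq_bigr => a _ do rewrite mulr_sumr.
rewrite pair_big_dep /= (exchange_big_dep (fun k : M * M => mdeg k.1 == P)) /=;
  last by move=> m k _ /andP [].
rewrite big_mkcondr /=; apply: eq_bigr => k /eqP deg1.
have [deg2|deg2] := eqVneq (mdeg k.2) Q; last first.
  by rewrite big1 // => m _; rewrite /split_term (dhomog_nemf_coeff homg deg2) expr0n !mulr0.
have degk : (mdeg (val k.1 + val k.2)%MM < (P + Q).+1)%N by rewrite mdegD deg1 deg2.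
rewrite (big_pred1 (BMultinom degk)) // => m /=; rewrite /msplit deg1 eqxx andbT.
apply/andP/idP => [[_ /eqP mk]|/eqP ->]; first by apply/eqP/val_inj.
by rewrite /= mdegD deg1 deg2 !eqxx.
Qed.

Lemma hs_sqnormM_le : hs_sqnorm (f * g) <= hs_sqnorm f * hs_sqnorm g.
Proof.
rewrite (hs_sqnorm_homog (ltnSn _) (dhomogM homf homg)) hs_sqnorm_mul_split.
by apply: ler_sum => m /eqP; apply: hs_weight_coeffM_le.
Qed.

Lemma hs_sqnormM_eq : hs_sqnorm (f * g) = hs_sqnorm f * hs_sqnorm g ->
  forall a b a' b', mdeg a = P -> mdeg b = Q -> mdeg a' = P -> mdeg b' = Q ->
  (a + b = a' + b')%MM -> phi a * psi b = phi a' * psi b'.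
Proof.
move=> eq_hs a b a' b' dega degb dega' degb' ab.
have degab : (mdeg (a + b)%MM < (P + Q).+1)%N by rewrite mdegD dega degb.
pose m : M := BMultinom degab.
have degm : mdeg m = (P + Q)%N by rewrite /= mdegD dega degb.
have gap_ge0 (m' : M) : mdeg m' == (P + Q)%N ->
    0 <= \sum_(k | msplit m' k) split_term k - hs_weight m' * (f * g)@_m' ^+ 2.
  by move/eqP=> degm'; rewrite subr_ge0 hs_weight_coeffM_le.
have sum_gap : \sum_(m' : M | mdeg m' == (P + Q)%N)
    (\sum_(k | msplit m' k) split_term k - hs_weight m' * (f * g)@_m' ^+ 2) = 0.
  rewrite sumrB -hs_sqnorm_mul_split -eq_hs.
  by rewrite (hs_sqnorm_homog (ltnSn _) (dhomogM homf homg)) subrr.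
move/eqP: (psumr_eq0P gap_ge0 sum_gap (introT eqP degm)); rewrite subr_eq0 => /eqP gap0.
have [_ cs_eq] := cauchy_schwarz_msplit degm.
have bmnm (x : 'X_{1..n}) d : mdeg x = d -> (d <= P + Q)%N -> (mdeg x < (P + Q).+1)%N.
  by move=> ->.
pose ka : M := BMultinom (bmnm a P dega (leq_addr _ _)).
pose kb : M := BMultinom (bmnm b Q degb (leq_addl _ _)).
pose ka' : M := BMultinom (bmnm a' P dega' (leq_addr _ _)).
pose kb' : M := BMultinom (bmnm b' Q degb' (leq_addl _ _)).
apply: (cs_eq _ (ka, kb) (ka', kb')).
- by rewrite gap0 -mulrA mulrCA [hs_weight m * _]mulrC (multinomial_hs_weight degm) mulr1.
- by rewrite /msplit /= dega !eqxx.
- by rewrite /msplit /= dega' ab !eqxx.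
Qed.

End HSNormMul.

Section ExchangeRankOne.
Context {R : realType} {n : nat} {P Q : nat} {f g : {mpoly R[n]}}.
Hypothesis homf : f \is P.-homog.
Local Notation phi a := (hs_weight a * f@_a).
Local Notation psi b := (hs_weight b * g@_b).
Hypothesis exchange : forall a b a' b', mdeg a = P -> mdeg b = Q -> mdeg a' = P ->
  mdeg b' = Q -> (a + b = a' + b')%MM -> phi a * psi b = phi a' * psi b'.
Context {b0 : 'X_{1..n}} {s : 'I_n}.
Hypotheses (degb0 : mdeg b0 = Q) (gb0 : g@_b0 != 0) (b0s : (0 < b0 s)%N).

Let u (i : 'I_n) : R := psi (b0 - U_(s) + U_(i))%MM / psi b0.
Let lam : R := phi (U_(s) *+ P)%MM.

Lemma exchange_u_s : u s = 1.
Proof.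
rewrite /u submK ?lep1mP -?lt0n // divff // mulf_neq0 // gt_eqF ?hs_weight_gt0 //.
Qed.

(* Induction on P - a s: exchanging one unit of a from some i != s to s. *)
Lemma exchange_phi_mpow a : mdeg a = P -> phi a = lam * mpow u a.
Proof.
move: a; suff claim t a : mdeg a = P -> (P - a s)%N = t -> phi a = lam * mpow u a.
  by move=> a degaP; apply: claim degaP erefl.
elim: t a => [|t IH] a degaP Pa.
  have as_le := mnm_le_mdeg a s; rewrite degaP in as_le.
  have -> : a = (U_(s) *+ P)%MM.
    apply/mnmP => j; rewrite mulmnE mnm1E; case: (eqVneq s j) => [<- | sj].
      by rewrite mul1n; lia.
    have := mdeg_ge_addn a j s sj; rewrite degaP mul0n; lia.
  by rewrite mpowMn mpowU exchange_u_s expr1n mulr1.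
have [i i_s ai] : exists2 i, i != s & (0 < a i)%N by apply: mdeg_gt_exists; lia.
pose a' := (a - U_(i) + U_(s))%MM; pose b' := (b0 - U_(s) + U_(i))%MM.
have dega' : mdeg a' = P by rewrite mdegD mdeg_mnmB1 // mdeg1 degaP addn1 prednK //; lia.
have b0_gt0 : (0 < mdeg b0)%N := leq_trans b0s (mnm_le_mdeg b0 s).
have degb' : mdeg b' = Q by rewrite mdegD mdeg_mnmB1 // mdeg1 addn1 prednK.
have a's : a' s = (a s).+1 by rewrite mnmDE mnmBE !mnm1E eqxx (negbTE i_s) subn0 addn1.
have phi_a' : phi a' = lam * mpow u a' by apply: IH; rewrite ?a's //; lia.
have ab : (a + b0 = a' + b')%MM.
  apply/mnmP => j; rewrite !mnmDE !mnmBE !mnm1E.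
  case: (eqVneq i j) => [<- | ij]; first by rewrite eq_sym (negbTE i_s); lia.
  by case: (eqVneq s j) => [<- | sj]; [lia | rewrite !subn0 !addn0].
have psi0 : psi b0 != 0 by rewrite mulf_neq0 // gt_eqF ?hs_weight_gt0.
have -> : phi a = lam * mpow u a' * psi b' / psi b0.
  by rewrite -phi_a' -(exchange _ _ _ _ degaP degb0 dega' degb' ab) mulfK.
rewrite /a' mpowD mpowU exchange_u_s mulr1 -(mpow_mnmB1 u ai) /u /b'.
set X := mpow _ _; set Z := psi b0; set Y := psi _; clearbody X Y Z; ring.
Qed.

Lemma exchange_power_linform : f = lam *: linform u ^+ P.
Proof.
apply/mpolyP => a; rewrite mcoeffZ mcoeff_linformX.
have [degaP | degaP] := eqVneq (mdeg a) P; last by rewrite mulr0 (dhomog_nemf_coeff homf).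
have hw0 : hs_weight a != 0 :> R by rewrite gt_eqF ?hs_weight_gt0.
apply: (mulfI hw0); rewrite exchange_phi_mpow // mulrCA [hs_weight a * _]mulrA.
by rewrite [hs_weight a * _]mulrC (multinomial_hs_weight degaP) mul1r.
Qed.

End ExchangeRankOne.

Lemma hs_sqnormM_eq_power_linform {R : realType} {n P Q} {f g : {mpoly R[n]}} :
  f \is P.-homog -> g \is Q.-homog -> g != 0 -> (0 < Q)%N ->
  hs_sqnorm (f * g) = hs_sqnorm f * hs_sqnorm g ->
  exists (lam : R) (u : 'I_n -> R), (exists i, u i != 0) /\ f = lam *: linform u ^+ P.
Proof.
move=> homf homg g0 Q_gt0 eq_hs.
have degb0 : mdeg (mlead g) = Q by apply: (dhomog_mf homg); apply: mlead_supp.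
have [s b0s] : exists s, (0 < mlead g s)%N by apply: mdeg_gt0_exists; rewrite degb0.
have exchange := hs_sqnormM_eq homf homg eq_hs.
have gb0 : g@_(mlead g) != 0 by rewrite mleadc_eq0.
do 2!eexists; split; last exact: (exchange_power_linform homf exchange degb0 gb0 b0s).
by exists s; rewrite (exchange_u_s gb0 b0s) oner_eq0.
Qed.

(* f and h := a L^P agree at u and f^k = h^k; the cofactor
   \sum_i f^(k-1-i) h^i of f - h in f^k - h^k takes the value k f(u)^(k-1) != 0 at u. *)
Lemma power_linformX_root {R : realFieldType} {n} {f : {mpoly R[n]}} {P k lam}
    {u : 'I_n -> R} :
  (0 < k)%N -> f != 0 -> (exists i, u i != 0) ->
  f ^+ k = lam *: linform u ^+ (P * k) ->
  exists a, a != 0 /\ f = a *: linform u ^+ P.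
Proof.
move=> k_gt0 f0 u0 fk.
set q := \sum_i u i ^+ 2; have q_gt0 : 0 < q := sum_sqr_gt0 u0.
have Lu : (linform u).@[u] = q.
  by rewrite meval_linform; apply: eq_bigr => i _; rewrite expr2.
have lam0 : lam != 0 by apply: contraNneq (expf_neq0 k f0) => lam0; rewrite fk lam0 scale0r.
have fu0 : f.@[u] != 0.
  apply/eqP => fu0; move: (congr1 (fun p => p.@[u]) fk) => /eqP.
  rewrite /= rmorphXn /= fu0 expr0n gtn_eqF // mevalZ rmorphXn /= Lu eq_sym.
  by rewrite mulf_eq0 (negbTE lam0) expf_eq0 gt_eqF // andbF.
have qP0 : q ^+ P != 0 by rewrite expf_neq0 // gt_eqF.
pose a := f.@[u] / q ^+ P; pose h := a *: linform u ^+ P.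
exists a; split; first by rewrite mulf_neq0 // invr_eq0.
have hu : h.@[u] = f.@[u] by rewrite mevalZ rmorphXn /= Lu /a mulfVK.
have hk : h ^+ k = f ^+ k.
  rewrite fk exprZn -exprM; congr (_ *: _).
  have qPk : q ^+ (P * k) != 0 by rewrite expf_neq0 // gt_eqF.
  apply: (mulIf qPk).
  have /(congr1 (fun p => p.@[u])) := fk.
  by rewrite /= mevalZ !rmorphXn /= Lu => <-; rewrite /a exprMn exprVn -exprM mulfVK.
have /eqP := subrXX f h k; rewrite -hk subrr eq_sym mulf_eq0 subr_eq0 => /orP[/eqP //|].
move/eqP/(congr1 (fun p => p.@[u])); rewrite meval0 raddf_sum /=.
have lt_k (i : 'I_k) : (i <= k.-1)%N by rewrite -ltnS prednK.
under eq_bigr => i _ do rewrite /= mevalM !rmorphXn /= hu -exprD (subnK (lt_k i)).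
rewrite sumr_const card_ord => /eqP; rewrite mulrn_eq0 expf_eq0 (negbTE fu0) andbF orbF.
by rewrite (gtn_eqF k_gt0).
Qed.

Lemma hs_normM_le {R : realType} {n P Q} {f g : {mpoly R[n]}} :
  f \is P.-homog -> g \is Q.-homog -> hs_norm (f * g) <= hs_norm f * hs_norm g.
Proof.
move=> homf homg; rewrite !hs_normE -sqrtrM ?hs_sqnorm_ge0 //.
by rewrite ler_sqrt ?mulr_ge0 ?hs_sqnorm_ge0 // (hs_sqnormM_le homf homg).
Qed.

Lemma hs_normX_lt_mul {R : realType} {n p} {f : {mpoly R[n]}} {k l} :
  f != 0 -> (0 < p)%N -> f \is p.-homog -> ~ power_of_linear_form f p ->
  (0 < k)%N -> (0 < l)%N ->
  hs_norm (f ^+ (k + l)) < hs_norm (f ^+ k) * hs_norm (f ^+ l).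
Proof.
move=> f0 p_gt0 homf not_power k_gt0 l_gt0.
have homfk := dhomogMn k homf; have homfl := dhomogMn l homf.
rewrite exprD !hs_normE -sqrtrM ?hs_sqnorm_ge0 //.
rewrite ltr_sqrt ?mulr_gt0 ?hs_sqnorm_gt0 ?expf_neq0 //.
rewrite lt_neqAle (hs_sqnormM_le homfk homfl) andbT; apply/eqP => eq_hs.
have pl_gt0 : (0 < p * l)%N by rewrite muln_gt0 p_gt0.
have [lam [u [u0 fk]]] :=
  hs_sqnormM_eq_power_linform homfk homfl (expf_neq0 l f0) pl_gt0 eq_hs.
have [a [a0 fE]] := power_linformX_root k_gt0 f0 u0 fk.
by apply: not_power; exists a, u.
Qed.

Section RealPowers.
Context {R : realType}.

Lemma powR_invnK {k} {y : R} : (0 < k)%N -> 0 <= y -> (y `^ (k%:R)^-1) ^+ k = y.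
Proof.
move=> k_gt0 y_ge0; rewrite -powR_mulrn ?powR_ge0 // -powRrM mulVf ?powRr1 //.
by rewrite pnatr_eq0 -lt0n.
Qed.

Lemma ler_powR_invn {k} {x y : R} : (0 < k)%N -> 0 <= x -> 0 <= y ->
  (x <= y `^ (k%:R)^-1) = (x ^+ k <= y).
Proof.
by move=> k_gt0 x_ge0 y_ge0; rewrite -[in RHS](powR_invnK k_gt0 y_ge0) ler_pXn2r
  // nnegrE ?powR_ge0.
Qed.

Lemma bernoulli_le (x : R) k : 0 <= x -> 1 + k%:R * x <= (1 + x) ^+ k.
Proof.
move=> x_ge0; elim: k => [|k IH]; first by rewrite mul0r addr0 expr0.
have x1_ge0 : 0 <= (1 + x) ^+ k by rewrite exprn_ge0 // addr_ge0.
have kx2_ge0 : 0 <= k%:R * (x * x) :> R by rewrite mulr_ge0 ?mulr_ge0.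
have step : (1 + x) * (1 + k%:R * x) <= (1 + x) * (1 + x) ^+ k.
  by rewrite ler_pM2l // ltr_pwDl.
rewrite exprS -natr1; apply: le_trans step; nra.
Qed.

End RealPowers.

Section SubmultiplicativeRoot.
Context {R : realType} {a : nat -> R}.
Hypotheses (a_gt0 : forall k, 0 < a k) (a_submul : forall k l, a (k + l)%N <= a k * a l).
Local Notation root k := (a k `^ (k%:R)^-1).
Local Notation roots := [set root k | k in [set k | (0 < k)%N]].

Lemma root_gt0 k : 0 < root k.
Proof. exact: powR_gt0. Qed.

Lemma submul_iter m q r : a (q * m + r)%N <= a m ^+ q * a r.
Proof.
elim: q => [|q IH]; first by rewrite mul0n add0n expr0 mul1r.
rewrite mulSn -addnA exprS -mulrA; apply: le_trans (a_submul _ _) _.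
by rewrite ler_pM2l.
Qed.

Let excess m := \sum_(r < m) a r / root m ^+ r.

(* Writing k = q m + r with r < m gives a k <= root m ^+ k * (a r / root m ^+ r). *)
Lemma root_le_root_mul {m k} : (0 < m)%N -> (0 < k)%N ->
  root k <= root m * (1 + excess m / k%:R).
Proof.
move=> m_gt0 k_gt0; set E := excess m.
have E_ge0 : 0 <= E.
  by apply: sumr_ge0 => r _; rewrite divr_ge0 ?exprn_ge0 ?powR_ge0 ?(ltW (a_gt0 _)).
have k_pos : 0 < k%:R :> R by rewrite ltr0n.
have rhs_ge0 : 0 <= root m * (1 + E / k%:R).
  by rewrite mulr_ge0 ?powR_ge0 // addr_ge0 // divr_ge0 // ltW.
rewrite -(ler_pXn2r k_gt0) ?nnegrE ?powR_ge0 // powR_invnK ?(ltW (a_gt0 k)) // exprMn.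
have ak_le : a k <= root m ^+ k * (a (k %% m) / root m ^+ (k %% m)).
  have -> : root m ^+ k * (a (k %% m) / root m ^+ (k %% m)) =
      a m ^+ (k %/ m) * a (k %% m).
    rewrite {1}(divn_eq k m) exprD mulnC exprM powR_invnK ?(ltW (a_gt0 m)) // -mulrA.
    by congr (_ * _); rewrite mulrC mulfVK // expf_neq0 // gt_eqF ?root_gt0.
  by rewrite {1}(divn_eq k m); apply: submul_iter.
apply: le_trans ak_le _; rewrite ler_pM2l ?exprn_gt0 ?root_gt0 //.
have r_lt : (k %% m < m)%N by rewrite ltn_mod.
apply: le_trans (_ : E <= _).
  rewrite /E /excess (bigD1 (Ordinal r_lt)) //= lerDl sumr_ge0 // => i _.
  by rewrite divr_ge0 ?exprn_ge0 ?powR_ge0 ?(ltW (a_gt0 _)).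
apply: le_trans _ (bernoulli_le _ k (divr_ge0 E_ge0 (ltW k_pos))).
by rewrite mulrC divfK ?gt_eqF // lerDr.
Qed.

Lemma has_inf_roots : has_inf roots.
Proof. by split; [exists (root 1), 1%N | exists 0 => _ [k _ <-]; apply: powR_ge0]. Qed.

Lemma inf_roots_le {k} : (0 < k)%N -> inf roots <= root k.
Proof. by move=> k_gt0; apply: ge_inf; [exact: has_inf_roots.2 | exists k]. Qed.

Lemma root_cvg_inf : (fun k => root k) @ \oo --> inf roots.
Proof.
apply/cvgrPdist_le => e e_gt0.
have [_ [m m_gt0 <-] root_m_lt] := inf_adherent (divr_gt0 e_gt0 (ltr0Sn _ 1)) has_inf_roots.
set C := root m * excess m.
have [K CK] : exists K : nat, C * 2 / e < K%:R.
  by exists (Num.Def.truncn (C * 2 / e)).+1; apply: truncnS_gt.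
near=> k.
have k_gt0 : (0 < k)%N by near: k; exact: nbhs_infty_gt.
have Kk : K%:R < k%:R :> R by rewrite ltr_nat; near: k; exact: nbhs_infty_gt.
have Ck : C / k%:R <= e / 2.
  rewrite ler_pdivrMr ?ltr0n // mulrC -ler_pdivrMr ?divr_gt0 //; apply: ltW.
  rewrite (_ : C / (e / 2) = C * 2 / e); first exact: lt_trans CK Kk.
  by field; rewrite gt_eqF.
have := root_le_root_mul m_gt0 k_gt0; rewrite mulrDr mulr1 mulrA -/C => root_k.
have inf_le := inf_roots_le k_gt0.
by rewrite distrC ger0_norm ?subr_ge0 //; lra.
Unshelve. all: by end_near.
Qed.

Hypothesis a_submul_lt : forall k l, (0 < k)%N -> (0 < l)%N -> a (k + l)%N < a k * a l.

Lemma root_double_lt {k} : (0 < k)%N -> root (2 * k) < root k.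
Proof.
move=> k_gt0; have k2_gt0 : (0 < 2 * k)%N by rewrite muln_gt0.
rewrite -(ltr_pXn2r k2_gt0) ?nnegrE ?powR_ge0 // powR_invnK ?(ltW (a_gt0 _)) //.
have -> : root k ^+ (2 * k) = a k ^+ 2.
  by rewrite mulnC exprM powR_invnK ?(ltW (a_gt0 _)).
by rewrite expr2 mul2n -addnn a_submul_lt.
Qed.

Lemma inf_roots_lt k : (0 < k)%N -> inf roots < root k.
Proof.
move=> k_gt0; apply: le_lt_trans _ (root_double_lt k_gt0).
by apply: inf_roots_le; rewrite muln_gt0.
Qed.

Lemma exprn_lt_of_le_roots {s k} : 0 <= s -> (forall j, (0 < j)%N -> s <= root j) ->
  (0 < k)%N -> s ^+ k < a k.
Proof.
move=> s_ge0 s_le k_gt0; rewrite -(powR_invnK k_gt0 (ltW (a_gt0 k))).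
rewrite ltr_pXn2r ?nnegrE ?powR_ge0 //; apply: le_lt_trans _ (root_double_lt k_gt0).
by apply: s_le; rewrite muln_gt0.
Qed.

End SubmultiplicativeRoot.

Section SpectralNorm.
Context {R : realType} {n : nat}.
Implicit Types (p : {mpoly R[n]}) (x : 'I_n -> R).

Lemma sigma_norm_ge0 p : 0 <= sigma_norm p.
Proof.
rewrite /sigma_norm; set A := [set _ | _ in _].
have [supA | /sup_out -> //] := pselect (has_sup A).
have [y Ay] := supA.1; apply: le_trans (sup_upper_bound supA Ay).
by case: Ay => x _ <-.
Qed.

Lemma sigma_norm_le p b : 0 <= b -> (forall x, l2norm x = 1 -> `|p.@[x]| <= b) ->
  sigma_norm p <= b.
Proof.
move=> b_ge0 p_le; rewrite /sigma_norm; set A := [set _ | _ in _].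
have [-> | /set0P A0] := eqVneq A set0; first by rewrite sup0.
by apply: ge_sup => // _ [x x1 <-]; apply: p_le.
Qed.

Lemma sigma_norm_attained {p x0} : l2norm x0 = 1 ->
  (forall x, l2norm x = 1 -> `|p.@[x]| <= `|p.@[x0]|) -> sigma_norm p = `|p.@[x0]|.
Proof.
move=> x01 p_le; apply/le_anti; rewrite sigma_norm_le //=.
apply: sup_upper_bound; last by exists x0.
by split; [exists `|p.@[x0]|, x0 | exists `|p.@[x0]| => _ [x x1 <-]; apply: p_le].
Qed.

Lemma sigma_norm_le_hs_root {N p k} : p \is N.-homog -> (0 < k)%N ->
  sigma_norm p <= hs_norm (p ^+ k) `^ (k%:R)^-1.
Proof.
move=> homp k_gt0; apply: sigma_norm_le => [|x x1]; first exact: powR_ge0.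
rewrite ler_powR_invn ?sqrtr_ge0 // -normrX -rmorphXn.
exact: meval_le_hs_norm (dhomogMn k homp) x1.
Qed.

Lemma hs_norm_scale_linformX a (c : 'I_n -> R) N :
  hs_norm (a *: linform c ^+ N) = `|a| * l2norm c ^+ N.
Proof.
have c2_ge0 : 0 <= \sum_i c i ^+ 2 by apply: sumr_ge0 => i _; apply: sqr_ge0.
rewrite hs_normE (hs_sqnormZ _ (linformX_homog c N)) hs_sqnorm_linformX.
rewrite -(sqr_sqrtr c2_ge0) -exprM mulnC exprM -exprMn sqrtr_sqr normrM.
by rewrite [`|_ ^+ N|]ger0_norm // exprn_ge0 ?sqrtr_ge0.
Qed.

Lemma sigma_norm_scale_linformX a (c : 'I_n -> R) N : (exists i, c i != 0) ->
  sigma_norm (a *: linform c ^+ N) = `|a| * l2norm c ^+ N.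
Proof.
move=> c0; set L := l2norm c.
have L_gt0 : 0 < L by rewrite sqrtr_gt0 sum_sqr_gt0.
have L2 : \sum_i c i ^+ 2 = L ^+ 2 by rewrite sqr_sqrtr // ltW ?sum_sqr_gt0.
pose x0 i := c i / L.
have x01 : l2norm x0 = 1.
  rewrite /l2norm /x0; under eq_bigr => i _ do rewrite expr_div_n.
  by rewrite -mulr_suml L2 divff ?sqrtr1 // expf_neq0 // gt_eqF.
have value : `|(a *: linform c ^+ N).@[x0]| = `|a| * L ^+ N.
  rewrite mevalZ rmorphXn /= meval_linform /x0.
  under eq_bigr => i _ do rewrite mulrA -expr2.
  by rewrite -mulr_suml L2 expr2 mulfK ?gt_eqF // normrM normrX (ger0_norm (ltW L_gt0)).
rewrite (sigma_norm_attained x01) // value -hs_norm_scale_linformX => x x1.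
exact: meval_le_hs_norm (dhomogZ a (linformX_homog c N)) x1.
Qed.

End SpectralNorm.

Theorem theorem2p2 (R : realType) (n p : nat) (f : {mpoly R[n]}) :
  f != 0 -> (0 < p)%N -> f \is p.-homog ->
  (forall (a : R) (c : 'I_n -> R),
      a != 0 -> (exists i, c i != 0) -> f = a *: (\sum_i c i *: 'X_i) ^+ p ->
      forall k : nat,
        hs_norm (f ^+ k) = sigma_norm (f ^+ k) /\
        sigma_norm (f ^+ k) = `|a| ^+ k * l2norm c ^+ (k * p))
  /\
  (~ power_of_linear_form f p ->
      (forall k l : nat, (0 < k)%N -> (0 < l)%N ->
          hs_norm (f ^+ (k + l)) < hs_norm (f ^+ k) * hs_norm (f ^+ l)) /\
      (forall k : nat, (0 < k)%N -> hs_norm (f ^+ (2 * k)) < hs_norm (f ^+ k) ^+ 2) /\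
      (forall k : nat, (0 < k)%N -> sigma_norm f ^+ k < hs_norm (f ^+ k)) /\
      cvgn (hs_root_seq f) /\
      sigma_norm f <= rho1 f /\
      (forall k : nat, (0 < k)%N -> rho1 f < hs_norm (f ^+ k) `^ (k%:R)^-1)).
Proof.
move=> f0 p_gt0 homf; split.
  move=> a c _ c0 fE k.
  have fkE : f ^+ k = a ^+ k *: linform c ^+ (k * p) by rewrite fE exprZn -exprM mulnC.
  by rewrite fkE hs_norm_scale_linformX sigma_norm_scale_linformX // normrX.
move=> not_power; pose a k := hs_norm (f ^+ k).
have a_gt0 k : 0 < a k := hs_norm_gt0 (expf_neq0 k f0).
have a_submul k l : a (k + l)%N <= a k * a l.
  by rewrite /a exprD (hs_normM_le (dhomogMn k homf) (dhomogMn l homf)).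
have a_lt k l : (0 < k)%N -> (0 < l)%N -> a (k + l)%N < a k * a l.
  exact: hs_normX_lt_mul f0 p_gt0 homf not_power.
have sigma_le j : (0 < j)%N -> sigma_norm f <= hs_root_seq f j.
  exact: sigma_norm_le_hs_root homf.
have root_cvg := root_cvg_inf a_gt0 a_submul.
have rho1E : rho1 f = inf [set hs_root_seq f k | k in [set k | (0 < k)%N]].
  exact: cvg_lim root_cvg.
split; first exact: a_lt.
split; first by move=> k k_gt0; rewrite expr2 mul2n -addnn a_lt.
split; first by move=> k; apply: (exprn_lt_of_le_roots a_gt0 a_lt (sigma_norm_ge0 f)).
split; first exact: cvgP root_cvg.
split.
  rewrite rho1E; apply: lb_le_inf => [|_ [j j_gt0 <-]]; last exact: sigma_le.
  by exists (hs_root_seq f 1), 1%N.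
by move=> k k_gt0; rewrite rho1E; apply: inf_roots_lt.
Qed.
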